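(* Let $n\ge 2$ and $y=(y_1,\dots,y_{n-1},q)\in\mathbb C^n$. The following are equivalent (in each condition, ''for all $j$'' means for all $j=1,\dots,[n/2]$): (1) $y\in\widetilde{\mathbb G}_n$; (2) $\binom{n}{j}-y_jz-y_{n-j}w+\binom{n}{j}qzw\neq 0$ for all $z,w\in\overline{\mathbb D}$ and all $j$; (3) for all $j$: $\|\Phi_j(\cdot,y)\|_{H^\infty}<1$, and if $y_jy_{n-j}=\binom{n}{j}^2q$ then in addition $|y_{n-j}|<\binom{n}{j}$; (3') for all $j$: $\|\Phi_{n-j}(\cdot,y)\|_{H^\infty}<1$, and if $y_jy_{n-j}=\binom{n}{j}^2q$ then in addition $|y_j|<\binom{n}{j}$; (4) for all $j$: $\binom{n}{j}|y_j-\bar y_{n-j}q|+|y_jy_{n-j}-\binom{n}{j}^2q|<\binom{n}{j}^2-|y_{n-j}|^2$; (4') for all $j$: $\binom{n}{j}|y_{n-j}-\bar y_{j}q|+|y_jy_{n-j}-\binom{n}{j}^2q|<\binom{n}{j}^2-|y_{j}|^2$; (5) for all $j$: $|y_j|^2-|y_{n-j}|^2+\binom{n}{j}^2|q|^2+2\binom{n}{j}|y_{n-j}-\bar y_jq|<\binom{n}{j}^2$ and $|y_{n-j}|<\binom{n}{j}$; (5') for all $j$: $|y_{n-j}|^2-|y_{j}|^2+\binom{n}{j}^2|q|^2+2\binom{n}{j}|y_{j}-\bar y_{n-j}q|<\binom{n}{j}^2$ and $|y_{j}|<\binom{n}{j}$; (6) $|q|<1$ and $|y_j|^2+|y_{n-j}|^2-\binom{n}{j}^2|q|^2+2|y_jy_{n-j}-\binom{n}{j}^2q|<\binom{n}{j}^2$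 for all $j$; (7) $|y_{n-j}-\bar y_jq|+|y_j-\bar y_{n-j}q|<\binom{n}{j}(1-|q|^2)$ for all $j$; (8) there exist $2\times 2$ complex matrices $B_1,\dots,B_{[n/2]}$ with $\|B_j\|<1$, $y_j=\binom{n}{j}[B_j]_{11}$, $y_{n-j}=\binom{n}{j}[B_j]_{22}$ for all $j$, and $\det B_1=\dots=\det B_{[n/2]}=q$; (9) the same as (8) with the $B_j$ additionally symmetric matrices.
   Context: $\mathbb D$ is the open unit disc, $[x]$ the integer part, $\|\cdot\|$ the operator norm. $\widetilde{\mathbb G}_n=\{(y_1,\dots,y_{n-1},q)\in\mathbb C^n: q\in\mathbb D,\ y_j=\beta_j+\bar\beta_{n-j}q$ for some $\beta_j\in\mathbb C$ with $|\beta_j|+|\beta_{n-j}|<\binom{n}{j}$, $j=1,\dots,n-1\}$. For $z\in\mathbb C$, $y=(y_1,\dots,y_{n-1},q)\in\mathbb C^n$ and $j\in\{1,\dots,n-1\}$, define $\Phi_j(z,y)=\dfrac{\binom{n}{j}qz-y_j}{y_{n-j}z-\binom{n}{j}}$ if $y_{n-j}z\ne\binom{n}{j}$ and $y_jy_{n-j}\neq\binom{n}{j}^2q$, and $\Phi_j(z,y)=y_j/\binom{n}{j}$ if $y_jy_{n-j}=\binom{n}{j}^2q$. Set $\|\Phi_j(\cdot,y)\|_{H^\infty}=\sup_{z\in\mathbb D}|\Phi_j(z,y)|$, understood as $+\infty$ if $\Phi_j(\cdot,y)$ is undefined somewhere on $\mathbb D$ or unbounded there. *)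

From HB Require Import structures.
From mathcomp Require Import all_boot all_order all_algebra.
From mathcomp Require Import complex.
From mathcomp Require Import boolp classical_sets reals constructive_ereal ereal.
Set Implicit Arguments. Unset Strict Implicit. Unset Printing Implicit Defensive.
Import Order.TTheory GRing.Theory Num.Theory.
Local Open Scope ring_scope.
Local Open Scope classical_set_scope.

Section Defs.
Variable R : realType.
Local Notation C := R[i].

Definition cmod (z : C) : R := ComplexField.Normc.normc z.

Definition cconj (z : C) : C := conjc z.

Definition cbin (n j : nat) : C := ('C(n, j))%:R.

Definition rbin (n j : nat) : R := ('C(n, j))%:R.

(** The domain tilde G_n. A point y = (y_1,...,y_(n-1), q) of C^n is
    encoded by a sequence y : nat -> C (only y 1, ..., y (n-1) are relevant)
    and the last coordinate q : C. *)
Definition tildeG (n : nat) (y : nat -> C) (q : C) : Prop :=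
  cmod q < 1 /\
  exists beta : nat -> C, forall j : nat, (1 <= j <= n.-1)%N ->
    y j = beta j + cconj (beta (n - j)%N) * q /\
    cmod (beta j) + cmod (beta (n - j)%N) < ('C(n, j))%:R.

Definition Phi (n j : nat) (y : nat -> C) (q : C) (z : C) : option C :=
  if y j * y (n - j)%N == cbin n j ^+ 2 * q then Some (y j / cbin n j)
  else if y (n - j)%N * z != cbin n j
       then Some ((cbin n j * q * z - y j) / (y (n - j)%N * z - cbin n j))
       else None.

Definition PhiHinf (n j : nat) (y : nat -> C) (q : C) : \bar R :=
  if `[< exists2 z : C, cmod z < 1 & Phi n j y q z = None >] then +oo%E
  else ereal_sup [set (cmod (odflt 0 (Phi n j y q z)))%:E | z in [set z : C | cmod z < 1]].

Definition vnorm2 (v : 'cV[C]_2) : R :=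
  Num.sqrt (cmod (v ord0 ord0) ^+ 2 + cmod (v (lift ord0 ord0) ord0) ^+ 2).

Definition opnorm2 (B : 'M[C]_2) : R :=
  sup [set vnorm2 (B *m v) | v in [set v : 'cV[C]_2 | vnorm2 v = 1]].

End Defs.

(* Everything decouples over the indices j <= n/2: with c = binom(n, j), a = y_j,
   b = y_(n-j) and p = q, each of (2)-(9) is the conjunction over j of a condition on
   the quadruple (c, a, b, p), and (1) decouples as well because
   beta_j = (y_j - conj(y_(n-j)) q) / (1 - |q|^2) is a witness for every j at once.

   For one quadruple, c - a z - b w + c p z w has no zero on the closed bidisc iff
   |a - c p w| < |c - b w| for |w| <= 1, i.e. iff Phi(w) = (c p w - a) / (b w - c) is a
   strict contraction of the closed disc.  On the unit circle this is (5).  The identity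
     (a - c p z) (c^2 - |b|^2) = c (a - conj(b) p) (c - b z) + (a b - c^2 p) (c z - conj(b)),
   whose last factor has modulus |c - b z| on the circle and at most that inside, computes
   sup |Phi| as the left side of (4) divided by c^2 - |b|^2; this gives (5) -> (4) -> (3),
   and (3) -> (2) by letting w tend to the circle.  Adding (5) and its mirror image gives
   (7), from which beta_j recovers (1).  Finally a zero of the polynomial produces a
   vector that a matrix of (8) does not shrink, while (6) says that the trace and the
   determinant of B^* B, for the symmetric B = [[a/c, w], [w, b/c]] with
   w^2 = (a b - c^2 p) / c^2, keep both eigenvalues of B^* B below 1. *)

From HB Require Import structures.
From mathcomp Require Import all_boot all_order all_algebra.
From mathcomp Require Import complex.
From mathcomp Require Import boolp classical_sets reals constructive_ereal ereal.
From mathcomp Require Import ring lra zify.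
Import Order.TTheory GRing.Theory Num.Theory.
Set Implicit Arguments. Unset Strict Implicit. Unset Printing Implicit Defensive.
Local Open Scope ring_scope.
Local Open Scope complex_scope.

Lemma quadratic_le0_at1 (R : realFieldType) (h0 h1 h2 : R) :
  (forall t, 0 <= t -> t < 1 -> h0 + h1 * t + h2 * t ^+ 2 <= 0) -> h0 + h1 + h2 <= 0.
Proof.
move=> h; rewrite leNgt; apply/negP => S_gt0.
set S := h0 + h1 + h2 in S_gt0; set K := `|h1| + 3 * `|h2| + 1.
have K_gt0 : 0 < K by rewrite /K ltr_pwDr // addr_ge0 ?mulr_ge0.
have SK_gt0 : 0 < S + K by rewrite addr_gt0.
set d := S / (S + K).
have d_gt0 : 0 < d by rewrite divr_gt0.
have d_lt1 : d < 1 by rewrite ltr_pdivrMr // mul1r ltrDl.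
have dK : d * K < S by rewrite mulrAC ltr_pdivrMr // ltr_pM2l // ltrDr.
have coef : h1 + 2 * h2 - d * h2 <= K.
  have : - (d * h2) <= `|h2|.
    apply: le_trans (ler_norm _) _; rewrite normrN normrM gtr0_norm //.
    by rewrite ler_piMl ?normr_ge0 ?ltW.
  have := ler_norm h1; have := ler_norm h2; rewrite /K; lra.
have := h (1 - d); rewrite subr_ge0 ltrBlDr ltrDl (ltW d_lt1) => /(_ isT d_gt0).
have -> : h0 + h1 * (1 - d) + h2 * (1 - d) ^+ 2 = S - d * (h1 + 2 * h2 - d * h2).
  by rewrite /S; ring.
have := ler_wpM2l (ltW d_gt0) coef; lra.
Qed.

Lemma psd_form_le (R : realFieldType) (h11 h22 r mu X Y : R) :
  h11 <= mu -> h22 <= mu -> r ^+ 2 <= (mu - h11) * (mu - h22) ->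
  h11 * X ^+ 2 + h22 * Y ^+ 2 + 2 * r * X * Y <= mu * (X ^+ 2 + Y ^+ 2).
Proof.
set P1 := mu - h11; set P2 := mu - h22 => h1 h2 hr.
have P1_ge0 : 0 <= P1 by rewrite subr_ge0. have P2_ge0 : 0 <= P2 by rewrite subr_ge0.
rewrite -subr_ge0.
have -> : mu * (X ^+ 2 + Y ^+ 2) - (h11 * X ^+ 2 + h22 * Y ^+ 2 + 2 * r * X * Y) =
          P1 * X ^+ 2 + P2 * Y ^+ 2 - 2 * r * X * Y by rewrite /P1 /P2; ring.
have [P0|P_gt0] := eqVneq (P1 + P2) 0.
  have [P1_0 P2_0] : P1 = 0 /\ P2 = 0 by lra.
  move: hr; rewrite P1_0 P2_0 mulr0 => hr.
  have -> : r = 0 by apply/eqP; rewrite -sqrf_eq0 eq_le hr sqr_ge0.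
  by rewrite !(mul0r, mulr0) subr0 addr0.
have {P_gt0}P_gt0 : 0 < P1 + P2 by rewrite lt_def P_gt0 addr_ge0.
rewrite -(pmulr_rge0 _ P_gt0).
have -> : (P1 + P2) * (P1 * X ^+ 2 + P2 * Y ^+ 2 - 2 * r * X * Y) =
  (P1 * X - r * Y) ^+ 2 + (P2 * Y - r * X) ^+ 2 + (P1 * P2 - r ^+ 2) * (X ^+ 2 + Y ^+ 2) by ring.
by rewrite !addr_ge0 ?sqr_ge0 // mulr_ge0 ?subr_ge0 ?addr_ge0 ?sqr_ge0.
Qed.

(* The witness is mu = 1 - e with e = (1 - T + P) / (2 - T), where T = h11 + h22 and
   P = h11 h22 - r^2: then (mu - h11) (mu - h22) - r^2 = e^2. *)
Lemma contraction_margin (R : realFieldType) (h11 h22 r : R) :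
  0 <= h11 -> 0 <= h22 -> h11 * h22 - r ^+ 2 < 1 -> h11 + h22 - (h11 * h22 - r ^+ 2) < 1 ->
  exists mu, [/\ mu < 1, h11 <= mu, h22 <= mu & r ^+ 2 <= (mu - h11) * (mu - h22)].
Proof.
move=> h11_ge0 h22_ge0; set P := h11 * h22 - r ^+ 2; set T := h11 + h22 => P1 TP1.
have T2 : 0 < 2 - T by lra.
set e := (1 - T + P) / (2 - T).
have e_gt0 : 0 < e by rewrite divr_gt0 //; lra.
have eE : e * (2 - T) = 1 - T + P by rewrite divfK // gt_eqF.
have prodE : (1 - e - h11) * (1 - e - h22) - r ^+ 2 = e ^+ 2.
  have -> : (1 - e - h11) * (1 - e - h22) - r ^+ 2 = e ^+ 2 + (1 - T + P - e * (2 - T)).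
    by rewrite /T /P; ring.
  by rewrite eE subrr addr0.
have discr : 4 * P <= T ^+ 2.
  rewrite -subr_ge0 (_ : _ - _ = (h11 - h22) ^+ 2 + 4 * r ^+ 2); last by rewrite /T /P; ring.
  by have := sqr_ge0 (h11 - h22); have := sqr_ge0 r; lra.
have sum_ge0 : 0 <= (1 - e - h11) + (1 - e - h22).
  rewrite -(pmulr_rge0 _ T2).
  have -> : (2 - T) * ((1 - e - h11) + (1 - e - h22)) = (2 - T) ^+ 2 - 2 * (e * (2 - T)).
    by rewrite /T; ring.
  rewrite eE; have := sqr_ge0 (T - 2); nra.
exists (1 - e); split; [lra | | |].
- have := sqr_ge0 e; nra.
- have := sqr_ge0 e; nra.
- by rewrite -subr_ge0 prodE sqr_ge0.
Qed.

Lemma sqrt_sum_sqr_le (R : rcfType) (x y : R) : 0 <= x -> 0 <= y ->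
  Num.sqrt (x ^+ 2 + y ^+ 2) <= x + y.
Proof.
move=> x0 y0; rewrite -[x + y]ger0_norm ?addr_ge0 // -sqrtr_sqr ler_sqrt ?sqr_ge0 //.
by rewrite sqrrD lerD2r lerDl mulrn_wge0 // mulr_ge0.
Qed.

Section ComplexModulus.
Variable R : realType.
Implicit Types (r : R) (x z : R[i]).

Lemma cmod_ge0 z : 0 <= cmod z.
Proof. by case: z => a b; exact: sqrtr_ge0. Qed.

Lemma sqr_cmod z : cmod z ^+ 2 = complex.Re z ^+ 2 + complex.Im z ^+ 2.
Proof. by case: z => a b; rewrite /cmod /= sqr_sqrtr // addr_ge0 ?sqr_ge0. Qed.

Lemma cmod0 : cmod (0 : R[i]) = 0.
Proof. exact: ComplexField.Normc.normc0. Qed.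

Lemma cmod1 : cmod (1 : R[i]) = 1.
Proof. exact: ComplexField.Normc.normc1. Qed.

Lemma cmod_eq0 z : (cmod z == 0) = (z == 0).
Proof.
by apply/eqP/eqP => [/ComplexField.Normc.eq0_normc|->]; last exact: cmod0.
Qed.

Lemma cmod_gt0 z : (0 < cmod z) = (z != 0).
Proof. by rewrite lt_def cmod_eq0 cmod_ge0 andbT. Qed.

Lemma cmodM x z : cmod (x * z) = cmod x * cmod z.
Proof. exact: ComplexField.Normc.normcM. Qed.

Lemma cmod_div x z : cmod (x / z) = cmod x / cmod z.
Proof. by rewrite cmodM [cmod _^-1]ComplexField.Normc.normcV. Qed.

Lemma cmodN z : cmod (- z) = cmod z.
Proof. exact: normcN. Qed.

Lemma cmod_distC x z : cmod (x - z) = cmod (z - x).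
Proof. by rewrite -cmodN opprB. Qed.

Lemma ler_cmodD x z : cmod (x + z) <= cmod x + cmod z.
Proof. exact: le_normcD. Qed.

Lemma cmodJ z : cmod (cconj z) = cmod z.
Proof. by case: z => a b; rewrite /cmod /cconj /= sqrrN. Qed.

Lemma cmod_real r : cmod r%:C = `|r|.
Proof. by rewrite /cmod /= expr0n /= addr0 sqrtr_sqr. Qed.

Lemma Re_le_cmod z : complex.Re z <= cmod z.
Proof.
case: z => a b; rewrite /cmod /=; apply: le_trans (ler_norm a) _.
by rewrite -sqrtr_sqr ler_sqrt ?addr_ge0 ?sqr_ge0 // lerDl sqr_ge0.
Qed.

Lemma mulcJ_cmod z : z * cconj z = (cmod z ^+ 2)%:C.
Proof.
rewrite sqr_cmod; case: z => a b /=.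
by apply/eqP; rewrite eq_complex /=; apply/andP; split; apply/eqP; ring.
Qed.

Lemma unit_rotation v : exists2 e : R[i], cmod e = 1 & e * v = (cmod v)%:C.
Proof.
have [->|v0] := eqVneq v 0; first by exists 1; rewrite ?cmod1 // mulr0 cmod0.
have nv0 : (cmod v)%:C != 0 by rewrite fmorph_eq0 cmod_eq0.
exists (cconj v / (cmod v)%:C).
  by rewrite cmod_div cmodJ cmod_real ger0_norm ?cmod_ge0 // divff // cmod_eq0.
by rewrite mulrAC [cconj v * v]mulrC mulcJ_cmod rmorphXn expr2 mulrK // unitfE.
Qed.

Lemma unit_align x z : exists2 e : R[i], cmod e = 1 & cmod (x + z * e) = cmod x + cmod z.
Proof.
have [ex ex1 hx] := unit_rotation x; have [ez ez1 hz] := unit_rotation z.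
have exJ : ex * cconj ex = 1 by rewrite mulcJ_cmod ex1 expr1n.
exists (cconj ex * ez); first by rewrite cmodM cmodJ ex1 ez1 mulr1.
have -> : x + z * (cconj ex * ez) = cconj ex * ((cmod x)%:C + (cmod z)%:C).
  by rewrite -hx -hz -[in LHS](mul1r x) -exJ; ring.
by rewrite cmodM cmodJ ex1 mul1r -rmorphD cmod_real ger0_norm // addr_ge0 ?cmod_ge0.
Qed.

Lemma cconjB x z : cconj (x - z) = cconj x - cconj z.
Proof. exact: rmorphB. Qed.

Lemma cconjD x z : cconj (x + z) = cconj x + cconj z.
Proof. exact: rmorphD. Qed.

Lemma cconjM x z : cconj (x * z) = cconj x * cconj z.
Proof. exact: rmorphM. Qed.

Lemma cconjV z : cconj z^-1 = (cconj z)^-1.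
Proof. exact: fmorphV. Qed.

Lemma cconjK z : cconj (cconj z) = z.
Proof. exact: conjcK. Qed.

Lemma cconj_real r : cconj r%:C = r%:C.
Proof. exact: conjc_real. Qed.

Lemma unit_gapE z : (1 - cmod z ^+ 2)%:C = 1 - z * cconj z.
Proof. by rewrite rmorphB rmorph1 mulcJ_cmod. Qed.

Lemma unit_gap_gt0 z : cmod z < 1 -> 0 < 1 - cmod z ^+ 2.
Proof. by rewrite subr_gt0 expr_lt1 ?cmod_ge0. Qed.

End ComplexModulus.

Ltac complex_ring :=
  rewrite ?sqr_cmod /cconj;
  repeat match goal with
    z : ?T |- _ => let T' := eval hnf in T in
                   lazymatch T' with complex _ => case: z => ? ? end
  end;
  rewrite /=; ring.

Section AffineLimit.
Variable R : realType.

Lemma cmod_affine_identity (al be : R[i]) (t : R) :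
  cmod (al - t%:C * be) ^+ 2 =
  cmod al ^+ 2 - 2 * t * complex.Re (al * cconj be) + t ^+ 2 * cmod be ^+ 2.
Proof. complex_ring. Qed.

Lemma cmod_affine_le_at1 (al be ga de : R[i]) (M : R) : 0 <= M ->
  (forall t, 0 <= t -> t < 1 -> cmod (al - t%:C * be) <= M * cmod (ga - t%:C * de)) ->
  cmod (al - be) <= M * cmod (ga - de).
Proof.
move=> M0 h.
have sqr_le t : 0 <= t -> t < 1 ->
    cmod (al - t%:C * be) ^+ 2 - M ^+ 2 * cmod (ga - t%:C * de) ^+ 2 <= 0.
  move=> t0 t1; rewrite subr_le0 -exprMn ler_sqr ?nnegrE ?mulr_ge0 ?cmod_ge0 //.
  exact: h.
pose h0 := cmod al ^+ 2 - M ^+ 2 * cmod ga ^+ 2.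
pose h1 := - 2 * complex.Re (al * cconj be) + M ^+ 2 * 2 * complex.Re (ga * cconj de).
pose h2 := cmod be ^+ 2 - M ^+ 2 * cmod de ^+ 2.
have E t : cmod (al - t%:C * be) ^+ 2 - M ^+ 2 * cmod (ga - t%:C * de) ^+ 2 =
           h0 + h1 * t + h2 * t ^+ 2.
  by rewrite !cmod_affine_identity /h0 /h1 /h2; ring.
have hq t : 0 <= t -> t < 1 -> h0 + h1 * t + h2 * t ^+ 2 <= 0 by rewrite -E; exact: sqr_le.
have E1 := E 1; rewrite rmorph1 !mul1r expr1n !mulr1 in E1.
rewrite -ler_sqr ?nnegrE ?mulr_ge0 ?cmod_ge0 // exprMn -subr_le0 E1.
exact: quadratic_le0_at1 hq.
Qed.

End AffineLimit.

Section PairConditions.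
Variable R : realType.
Implicit Types (c : R) (a b p : R[i]).

(* Conditions (1)-(9) for one index j, with c = binom(n, j), a = y_j, b = y_(n-j), p = q;
   (3'), (4'), (5') are (3), (4), (5) for (c, b, a, p), up to the order of the product a b. *)
Definition cond1 c a b p := cmod p < 1 /\ exists b1 b2 : R[i],
  [/\ a = b1 + cconj b2 * p, b = b2 + cconj b1 * p & cmod b1 + cmod b2 < c].

Definition cond2 c a b p := forall z w : R[i], cmod z <= 1 -> cmod w <= 1 ->
  c%:C - a * z - b * w + c%:C * p * z * w != 0.

Definition Phi_pair c a b p (z : R[i]) : option R[i] :=
  if a * b == c%:C ^+ 2 * p then Some (a / c%:C)
  else if b * z != c%:C then Some ((c%:C * p * z - a) / (b * z - c%:C)) else None.

Definition Hinf_norm (f : R[i] -> option R[i]) : \bar R :=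
  if `[< exists2 z : R[i], cmod z < 1 & f z = None >] then +oo%E
  else ereal_sup [set (cmod (odflt 0 (f z)))%:E | z in [set z : R[i] | cmod z < 1]]%classic.

Definition cond3 c a b p :=
  (Hinf_norm (Phi_pair c a b p) < 1%:E)%E /\ (a * b = c%:C ^+ 2 * p -> cmod b < c).

Definition cond4 c a b p :=
  c * cmod (a - cconj b * p) + cmod (a * b - c%:C ^+ 2 * p) < c ^+ 2 - cmod b ^+ 2.

Definition cond5 c a b p :=
  cmod a ^+ 2 - cmod b ^+ 2 + c ^+ 2 * cmod p ^+ 2 + 2 * c * cmod (b - cconj a * p) < c ^+ 2
  /\ cmod b < c.

Definition cond6 c a b p := cmod p < 1 /\
  cmod a ^+ 2 + cmod b ^+ 2 - c ^+ 2 * cmod p ^+ 2 + 2 * cmod (a * b - c%:C ^+ 2 * p) < c ^+ 2.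

Definition cond7 c a b p :=
  cmod (b - cconj a * p) + cmod (a - cconj b * p) < c * (1 - cmod p ^+ 2).

Definition cond8 c a b p := exists B : 'M[R[i]]_2,
  [/\ opnorm2 B < 1, a = c%:C * B ord0 ord0, b = c%:C * B ord_max ord_max & \det B = p].

Definition cond9 c a b p := exists B : 'M[R[i]]_2,
  [/\ opnorm2 B < 1, a = c%:C * B ord0 ord0, b = c%:C * B ord_max ord_max, \det B = p
    & B^T = B].

End PairConditions.

Section HinfNorm.
Variable R : realType.
Implicit Types (f : R[i] -> option R[i]) (r : R).

Lemma Hinf_norm_le f r :
  (forall z, cmod z < 1 -> exists2 v, f z = Some v & cmod v <= r) -> (Hinf_norm f <= r%:E)%E.
Proof.
move=> hf; rewrite /Hinf_norm; case: asboolP => [[z z1 fz]|_].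
  by have [v] := hf z z1; rewrite fz.
by apply/ereal_supP => _ [z z1 <-]; have [v -> hv] := hf z z1; rewrite lee_fin.
Qed.

Lemma Hinf_norm_lt f r : (Hinf_norm f < r%:E)%E ->
  exists2 M, M < r & forall z, cmod z < 1 -> exists2 v, f z = Some v & cmod v <= M.
Proof.
rewrite /Hinf_norm; case: asboolP => [_|undef]; first by rewrite ltNge leey.
have def z : cmod z < 1 -> exists v, f z = Some v.
  by case fz : (f z) => [v|] z1; [exists v | case: undef; exists z].
set S := [set _ | z in _]%classic.
have ub z v : cmod z < 1 -> f z = Some v -> ((cmod v)%:E <= ereal_sup S)%E.
  by move=> z1 fz; apply: ereal_sup_ubound; exists z => //; rewrite fz.
have z0 : cmod (0 : R[i]) < 1 by rewrite cmod0.
case: (ereal_sup S) ub => [M| |] ub hlt.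
- exists M; first by rewrite -lte_fin.
  by move=> z z1; have [v fz] := def z z1; exists v => //; rewrite -lee_fin (ub z).
- by rewrite ltNge leey in hlt.
- by have [v /(ub 0 v z0)] := def 0 z0; rewrite leNgt ltNyr.
Qed.

End HinfNorm.

Section OperatorNorm.
Variable R : realType.
Implicit Types (B : 'M[R[i]]_2) (v : 'cV[R[i]]_2).
Local Open Scope classical_set_scope.

Lemma det_mx22 (T : comNzRingType) (A : 'M[T]_2) :
  \det A = A ord0 ord0 * A ord_max ord_max - A ord0 ord_max * A ord_max ord0.
Proof.
rewrite (expand_det_row _ ord0) !big_ord_recl big_ord0 addr0 /cofactor /=.
rewrite !det_mx11 !mxE /=.
have -> : lift ord0 (0 : 'I_1) = ord_max :> 'I_2 by apply/val_inj.
have -> : lift (ord_max : 'I_2) (0 : 'I_1) = ord0 :> 'I_2 by apply/val_inj.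
rewrite /bump /= expr0 expr1 mul1r; ring.
Qed.

Lemma lift0_ord_max : lift ord0 ord0 = ord_max :> 'I_2.
Proof. by apply/val_inj. Qed.

Lemma mulmx2 B v (i : 'I_2) :
  (B *m v) i ord0 = B i ord0 * v ord0 ord0 + B i ord_max * v ord_max ord0.
Proof. by rewrite mxE !big_ord_recl big_ord0 addr0 lift0_ord_max. Qed.

Lemma vnorm2E v : vnorm2 v = Num.sqrt (cmod (v ord0 ord0) ^+ 2 + cmod (v ord_max ord0) ^+ 2).
Proof. by rewrite /vnorm2 lift0_ord_max. Qed.

Lemma unit_vnorm2 v : vnorm2 v = 1 -> cmod (v ord0 ord0) ^+ 2 + cmod (v ord_max ord0) ^+ 2 = 1.
Proof.
rewrite vnorm2E => /(congr1 (fun x => x ^+ 2)).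
by rewrite sqr_sqrtr ?addr_ge0 ?sqr_ge0 ?expr1n.
Qed.

Definition col2 (x0 x1 : R[i]) : 'cV[R[i]]_2 := \col_i (if i == ord0 then x0 else x1).

Lemma col2_0 (x0 x1 : R[i]) : col2 x0 x1 ord0 ord0 = x0. Proof. by rewrite mxE. Qed.
Lemma col2_1 (x0 x1 : R[i]) : col2 x0 x1 ord_max ord0 = x1. Proof. by rewrite mxE. Qed.

Lemma unit_vnorm2_le1 v : vnorm2 v = 1 ->
  cmod (v ord0 ord0) <= 1 /\ cmod (v ord_max ord0) <= 1.
Proof.
move/unit_vnorm2 => v1; rewrite -!(@expr_le1 _ 2 (cmod _)) ?cmod_ge0 //.
by split; rewrite -v1 (lerDl, lerDr) sqr_ge0.
Qed.

Lemma has_sup_opnorm2 B :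
  has_sup [set vnorm2 (B *m v) | v in [set v : 'cV[R[i]]_2 | vnorm2 v = 1]].
Proof.
split.
  exists (vnorm2 (B *m col2 1 0)), (col2 1 0) => //.
  by rewrite /= vnorm2E col2_0 col2_1 cmod1 cmod0 expr1n expr0n addr0 sqrtr1.
exists (cmod (B ord0 ord0) + cmod (B ord0 ord_max)
        + (cmod (B ord_max ord0) + cmod (B ord_max ord_max))).
move=> _ [v /unit_vnorm2_le1 [v0 v1] <-]; rewrite vnorm2E !mulmx2.
apply: le_trans (sqrt_sum_sqr_le (cmod_ge0 _) (cmod_ge0 _)) _.
by apply: lerD; apply: le_trans (ler_cmodD _ _) _; rewrite !cmodM;
  apply: lerD; rewrite ler_piMr ?cmod_ge0.
Qed.

Lemma opnorm2_ge B v : vnorm2 v = 1 -> vnorm2 (B *m v) <= opnorm2 B.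
Proof. by move=> v1; apply: sup_upper_bound; [exact: has_sup_opnorm2 | exists v]. Qed.

Lemma opnorm2_le B (M : R) :
  (forall v, vnorm2 v = 1 -> vnorm2 (B *m v) <= M) -> opnorm2 B <= M.
Proof. by move=> hM; apply: ge_sup; [case: (has_sup_opnorm2 B) | move=> _ [v /hM ? <-]]. Qed.

Lemma opnorm2_ge1 B (x0 x1 : R[i]) : (x0 != 0) || (x1 != 0) ->
  cmod x0 ^+ 2 + cmod x1 ^+ 2 <=
    cmod (B ord0 ord0 * x0 + B ord0 ord_max * x1) ^+ 2 +
    cmod (B ord_max ord0 * x0 + B ord_max ord_max * x1) ^+ 2 ->
  1 <= opnorm2 B.
Proof.
move=> x_neq0 hle; set s := cmod x0 ^+ 2 + cmod x1 ^+ 2 in hle.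
have s_gt0 : 0 < s.
  by case/orP: x_neq0 => h; [rewrite ltr_pwDl | rewrite ltr_pwDr];
    rewrite ?sqr_ge0 ?exprn_gt0 ?cmod_gt0.
set k := (Num.sqrt s)%:C.
have k_neq0 : k != 0 by rewrite fmorph_eq0 sqrtr_eq0 -ltNge.
have cmod_k : cmod k = Num.sqrt s by rewrite cmod_real ger0_norm ?sqrtr_ge0.
have sqr_div (y : R) : (y / cmod k) ^+ 2 = y ^+ 2 / s.
  by rewrite expr_div_n cmod_k sqr_sqrtr ?(ltW s_gt0).
have u1 : vnorm2 (col2 (x0 / k) (x1 / k)) = 1.
  by rewrite vnorm2E col2_0 col2_1 !cmod_div !sqr_div -mulrDl divff ?sqrtr1 ?gt_eqF.
apply: le_trans (opnorm2_ge B u1).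
rewrite vnorm2E !mulmx2 col2_0 col2_1 !mulrA -!mulrDl !cmod_div !sqr_div -mulrDl.
rewrite -[X in X <= _]sqrtr1 ler_sqrt ?divr_ge0 ?addr_ge0 ?sqr_ge0 ?(ltW s_gt0) //.
by rewrite ler_pdivlMr // mul1r.
Qed.

Lemma symmetric_form_identity (al w de v0 v1 : R[i]) :
  cmod (al * v0 + w * v1) ^+ 2 + cmod (w * v0 + de * v1) ^+ 2 =
  (cmod al ^+ 2 + cmod w ^+ 2) * cmod v0 ^+ 2 + (cmod w ^+ 2 + cmod de ^+ 2) * cmod v1 ^+ 2
  + 2 * complex.Re (cconj v0 * (cconj al * w + cconj w * de) * v1).
Proof. complex_ring. Qed.

Lemma symmetric_gram_identity (al w de : R[i]) :
  (cmod al ^+ 2 + cmod w ^+ 2) * (cmod w ^+ 2 + cmod de ^+ 2)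
  - cmod (cconj al * w + cconj w * de) ^+ 2 = cmod (al * de - w * w) ^+ 2.
Proof. complex_ring. Qed.

Definition symmx2 (al w de : R[i]) : 'M[R[i]]_2 :=
  \matrix_(i, j) if i == j then (if i == ord0 then al else de) else w.

Lemma symmx2E (al w de : R[i]) :
  [/\ symmx2 al w de ord0 ord0 = al, symmx2 al w de ord_max ord_max = de,
      symmx2 al w de ord0 ord_max = w & symmx2 al w de ord_max ord0 = w].
Proof. by rewrite !mxE. Qed.

Lemma symmx2_tr (al w de : R[i]) : (symmx2 al w de)^T = symmx2 al w de.
Proof. by apply/matrixP => i j; rewrite !mxE; case: eqVneq => // ->. Qed.

(* [h11], [h22] are the diagonal entries of [B^* B] and [r] is the modulus of the
   off-diagonal one; the hypotheses bound its determinant and its trace minus its determinant. *)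
Lemma opnorm2_symmx2_lt1 (al w de : R[i]) :
  cmod (al * de - w * w) < 1 ->
  cmod al ^+ 2 + 2 * cmod w ^+ 2 + cmod de ^+ 2 - cmod (al * de - w * w) ^+ 2 < 1 ->
  opnorm2 (symmx2 al w de) < 1.
Proof.
move=> det_lt1 trace_lt1; have [B00 B11 B01 B10] := symmx2E al w de.
set h11 := cmod al ^+ 2 + cmod w ^+ 2; set h22 := cmod w ^+ 2 + cmod de ^+ 2.
set r := cmod (cconj al * w + cconj w * de).
have gram : h11 * h22 - r ^+ 2 = cmod (al * de - w * w) ^+ 2 by exact: symmetric_gram_identity.
have h11_ge0 : 0 <= h11 by rewrite addr_ge0 ?sqr_ge0.
have h22_ge0 : 0 <= h22 by rewrite addr_ge0 ?sqr_ge0.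
have [mu [mu_lt1 h11_le h22_le r_le]] : exists mu, [/\ mu < 1, h11 <= mu, h22 <= mu
    & r ^+ 2 <= (mu - h11) * (mu - h22)].
  by apply: contraction_margin; rewrite // gram ?expr_lt1 ?cmod_ge0 // /h11 /h22; lra.
apply: (@le_lt_trans _ _ (Num.sqrt mu)); last by rewrite -[X in _ < X]sqrtr1 ltr_sqrt ?ltr01.
apply: opnorm2_le => v v1; rewrite vnorm2E !mulmx2 B00 B01 B10 B11.
rewrite ler_sqrt ?(le_trans h11_ge0 h11_le) // symmetric_form_identity -/h11 -/h22 -/r.
have := psd_form_le (cmod (v ord0 ord0)) (cmod (v ord_max ord0)) h11_le h22_le r_le.
rewrite unit_vnorm2 // mulr1; apply: le_trans; rewrite lerD2l -!mulrA ler_pM2l //.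
by apply: le_trans (Re_le_cmod _) _; rewrite !cmodM cmodJ mulrCA.
Qed.

End OperatorNorm.

Section PairEquivalences.
Variables (R : realType) (c : R).
Hypothesis c_gt0 : 0 < c.
Implicit Types a b p z w x : R[i].

Lemma subc_neq0 x : cmod x < c -> c%:C - x != 0.
Proof.
move=> hx; apply: contraTneq hx => /eqP; rewrite subr_eq0 => /eqP <-.
by rewrite cmod_real gtr0_norm // ltxx.
Qed.

Lemma real_gapE b : (c ^+ 2 - cmod b ^+ 2)%:C = c%:C ^+ 2 - b * cconj b.
Proof. by rewrite mulcJ_cmod -rmorphXn -rmorphB. Qed.

Lemma gap_gt0 b : cmod b < c -> 0 < c ^+ 2 - cmod b ^+ 2.
Proof. by move=> hb; rewrite subr_gt0 ltr_sqr ?nnegrE ?cmod_ge0 ?(ltW c_gt0). Qed.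

Lemma cond2C a b p : cond2 c a b p -> cond2 c b a p.
Proof.
move=> h z w hz hw.
have -> : c%:C - b * z - a * w + c%:C * p * z * w = c%:C - a * w - b * z + c%:C * p * w * z.
  by ring.
exact: h.
Qed.

Lemma cond2_cmod_lt a b p : cond2 c a b p -> cmod b < c.
Proof.
move=> h; rewrite ltNge; apply/negP => hb.
have b0 : b != 0 by rewrite -cmod_gt0 (lt_le_trans c_gt0).
have hw : cmod (c%:C / b) <= 1.
  by rewrite cmod_div cmod_real gtr0_norm // ler_pdivrMr ?cmod_gt0 // mul1r.
have hz : cmod (0 : R[i]) <= 1 by rewrite cmod0.
by move: (h 0 _ hz hw); rewrite !mulr0 !mul0r subr0 addr0 mulrC divfK // subrr eqxx.
Qed.

Lemma cond2_cmod_ltr a b p w : cond2 c a b p -> cmod w <= 1 ->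
  cmod (a - c%:C * p * w) < cmod (c%:C - b * w).
Proof.
move=> h hw; rewrite ltNge; apply/negP => hle.
have E z : c%:C - a * z - b * w + c%:C * p * z * w = c%:C - b * w - z * (a - c%:C * p * w).
  by ring.
have [e0|ne0] := eqVneq (a - c%:C * p * w) 0.
  have hz : cmod (0 : R[i]) <= 1 by rewrite cmod0.
  move: (h 0 w hz hw) hle; rewrite E e0 mulr0 subr0 cmod0 -cmod_eq0.
  by rewrite eq_le cmod_ge0 andbT => /negbTE ->.
have hz : cmod ((c%:C - b * w) / (a - c%:C * p * w)) <= 1.
  by rewrite cmod_div ler_pdivrMr ?cmod_gt0 // mul1r.
by move: (h _ w hz hw); rewrite E divfK // subrr eqxx.
Qed.

Lemma circle_identity a b p z :
  cmod (a - c%:C * p * z) ^+ 2 - cmod (c%:C - b * z) ^+ 2 =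
  cmod a ^+ 2 + c ^+ 2 * cmod p ^+ 2 * cmod z ^+ 2 - c ^+ 2 - cmod b ^+ 2 * cmod z ^+ 2
  + 2 * c * complex.Re (z * (b - cconj a * p)).
Proof. complex_ring. Qed.

Lemma cond2_cond5 a b p : cond2 c a b p -> cond5 c a b p.
Proof.
move=> h; split; last exact: cond2_cmod_lt h.
have [z z1 hz] := unit_rotation (b - cconj a * p).
have z_le1 : cmod z <= 1 by rewrite z1.
have := cond2_cmod_ltr h z_le1.
rewrite -ltr_sqr ?nnegrE ?cmod_ge0 // -subr_lt0 circle_identity z1 hz /= expr1n !mulr1.
lra.
Qed.

Lemma cond5_cmod_ltr a b p z : cond5 c a b p -> cmod z = 1 ->
  cmod (a - c%:C * p * z) < cmod (c%:C - b * z).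
Proof.
move=> [h _] z1.
rewrite -ltr_sqr ?nnegrE ?cmod_ge0 // -subr_lt0 circle_identity z1 expr1n !mulr1.
have := Re_le_cmod (z * (b - cconj a * p)); rewrite cmodM z1 mul1r.
move/(ler_wpM2l (ltW (mulr_gt0 (ltr0n _ 2) c_gt0))).
lra.
Qed.

Lemma key_identity a b p z :
  (a - c%:C * p * z) * (c ^+ 2 - cmod b ^+ 2)%:C =
  c%:C * (a - cconj b * p) * (c%:C - b * z) + (a * b - c%:C ^+ 2 * p) * (c%:C * z - cconj b).
Proof. rewrite real_gapE; ring. Qed.

Lemma mobius_identity b e :
  cmod (e * c%:C + cconj b) ^+ 2 - cmod (c%:C + e * b) ^+ 2 =
  (c ^+ 2 - cmod b ^+ 2) * (cmod e ^+ 2 - 1).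
Proof. complex_ring. Qed.

Lemma unit_mobius_point b e : cmod b < c -> cmod e = 1 ->
  exists z, [/\ cmod z = 1, c%:C * z - cconj b = e * (c%:C - b * z) & c%:C - b * z != 0].
Proof.
move=> hb e1; set d := c%:C + e * b.
have d0 : d != 0 by rewrite /d -[e * b]opprK subc_neq0 // cmodN cmodM e1 mul1r.
set z := (e * c%:C + cconj b) / d.
have zd : z * d = e * c%:C + cconj b by rewrite divfK.
have z1 : cmod z = 1.
  have hsq : cmod (e * c%:C + cconj b) ^+ 2 = cmod d ^+ 2.
    by apply/eqP; rewrite -subr_eq0 mobius_identity e1 expr1n subrr mulr0.
  apply/eqP; rewrite -sqrp_eq1 ?cmod_ge0 // cmod_div expr_div_n hsq divff //.
  by rewrite sqrf_eq0 cmod_eq0.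
exists z; split => //; last by rewrite subc_neq0 // cmodM z1 mulr1.
apply: (mulIf d0).
have -> : (c%:C * z - cconj b) * d = c%:C * (z * d) - cconj b * d by ring.
have -> : e * (c%:C - b * z) * d = e * (c%:C * d - b * (z * d)) by ring.
by rewrite zd /d; ring.
Qed.

Lemma cond5_cond4 a b p : cond5 c a b p -> cond4 c a b p.
Proof.
move=> h5; have hb := h5.2.
have gap := gap_gt0 hb.
set N1 := c%:C * (a - cconj b * p); set N2 := a * b - c%:C ^+ 2 * p.
have [e e1 hN] := unit_align N1 N2.
have [z [z1 hz nz]] := unit_mobius_point hb e1.
have K : cmod (a - c%:C * p * z) * (c ^+ 2 - cmod b ^+ 2) =
         cmod (c%:C - b * z) * (cmod N1 + cmod N2).
  rewrite -hN -[c ^+ 2 - _]ger0_norm ?(ltW gap) // -cmod_real -!cmodM key_identity hz.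
  by congr cmod; rewrite /N1 /N2; ring.
have : cmod (c%:C - b * z) * (cmod N1 + cmod N2) <
       cmod (c%:C - b * z) * (c ^+ 2 - cmod b ^+ 2).
  by rewrite -K ltr_pM2r // cond5_cmod_ltr.
by rewrite ltr_pM2l ?cmod_gt0 // /N1 cmodM cmod_real gtr0_norm.
Qed.

Lemma mobius_disc_identity b z :
  cmod (c%:C - b * z) ^+ 2 - cmod (c%:C * z - cconj b) ^+ 2 =
  (c ^+ 2 - cmod b ^+ 2) * (1 - cmod z ^+ 2).
Proof. complex_ring. Qed.

Lemma cmod_mobius_le b z : cmod b <= c -> cmod z <= 1 ->
  cmod (c%:C * z - cconj b) <= cmod (c%:C - b * z).
Proof.
move=> hb hz; rewrite -ler_sqr ?nnegrE ?cmod_ge0 // -subr_ge0 mobius_disc_identity.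
apply: mulr_ge0; rewrite subr_ge0 ?exprn_ile1 ?cmod_ge0 //.
by rewrite ler_sqr ?nnegrE ?cmod_ge0 ?(ltW c_gt0).
Qed.

Lemma cond4_cmod_lt a b p : cond4 c a b p -> cmod b < c.
Proof.
move=> h4; rewrite -ltr_sqr ?nnegrE ?cmod_ge0 ?ltW // -subr_gt0.
by apply: le_lt_trans h4; rewrite addr_ge0 ?mulr_ge0 ?cmod_ge0 ?ltW.
Qed.

Lemma cond4_degenerate a b p : cond4 c a b p -> a * b = c%:C ^+ 2 * p -> cmod a < c.
Proof.
move=> h4 deg; have hb := cond4_cmod_lt h4.
have gap := gap_gt0 hb.
have E : c%:C ^+ 2 * (a - cconj b * p) = a * (c ^+ 2 - cmod b ^+ 2)%:C.
  have -> : c%:C ^+ 2 * (a - cconj b * p) = c%:C ^+ 2 * a - cconj b * (c%:C ^+ 2 * p) by ring.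
  by rewrite -deg real_gapE; ring.
move/(congr1 (@cmod R)): E.
rewrite !cmodM !cmod_real gtr0_norm // ger0_norm ?ltW // => E.
move: h4; rewrite /cond4 deg subrr cmod0 addr0 => h4.
have : cmod a * (c ^+ 2 - cmod b ^+ 2) < c * (c ^+ 2 - cmod b ^+ 2).
  by rewrite -E -mulrA ltr_pM2l.
by rewrite ltr_pM2r.
Qed.

Lemma cond4_cond3 a b p : cond4 c a b p -> cond3 c a b p.
Proof.
move=> h4; have hb := cond4_cmod_lt h4; split; last by [].
have gap := gap_gt0 hb.
have [deg|ndeg] := eqVneq (a * b) (c%:C ^+ 2 * p).
  apply: (@le_lt_trans _ _ (cmod a / c)%:E).
    apply: Hinf_norm_le => z _; rewrite /Phi_pair deg eqxx; exists (a / c%:C) => //.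
    by rewrite cmod_div cmod_real gtr0_norm.
  by rewrite lte_fin ltr_pdivrMr // mul1r (cond4_degenerate h4).
set M := (c * cmod (a - cconj b * p) + cmod (a * b - c%:C ^+ 2 * p)) / (c ^+ 2 - cmod b ^+ 2).
apply: (@le_lt_trans _ _ M%:E); last by rewrite lte_fin ltr_pdivrMr // mul1r.
apply: Hinf_norm_le => z z1.
have nz : c%:C - b * z != 0.
  by rewrite subc_neq0 // cmodM (le_lt_trans _ hb) // ler_piMr ?cmod_ge0 ?ltW.
exists ((c%:C * p * z - a) / (b * z - c%:C)).
  by rewrite /Phi_pair (negbTE ndeg) eq_sym -subr_eq0 nz.
rewrite cmod_div (cmod_distC _ a) (cmod_distC (b * z)) ler_pdivrMr ?cmod_gt0 //.
rewrite /M [X in _ <= X]mulrAC ler_pdivlMr //.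
rewrite -[c ^+ 2 - _]ger0_norm ?(ltW gap) // -cmod_real -cmodM.
rewrite key_identity; apply: le_trans (ler_cmodD _ _) _.
rewrite !cmodM cmod_real gtr0_norm // mulrDl lerD2l ler_wpM2l ?cmod_ge0 //.
by rewrite cmod_mobius_le ?ltW.
Qed.

Lemma cond3_bound a b p : cond3 c a b p -> a * b != c%:C ^+ 2 * p ->
  exists2 M, 0 <= M /\ M < 1 &
    forall w, cmod w <= 1 -> cmod (a - c%:C * p * w) <= M * cmod (c%:C - b * w).
Proof.
move=> [/Hinf_norm_lt [M M1 hM] _] ndeg.
have z0 : cmod (0 : R[i]) < 1 by rewrite cmod0.
have M0 : 0 <= M by have [v _ /(le_trans (cmod_ge0 v))] := hM 0 z0.
have open_disc z : cmod z < 1 -> cmod (a - c%:C * p * z) <= M * cmod (c%:C - b * z).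
  move=> z1; have [v] := hM z z1; rewrite /Phi_pair (negbTE ndeg).
  case: ifP => // bz [<-]; rewrite cmod_div (cmod_distC _ a) (cmod_distC (b * z)).
  by rewrite ler_pdivrMr // cmod_gt0 subr_eq0 eq_sym bz.
exists M => // w w1; have [w_lt1|w_eq1] := ltrP (cmod w) 1; first exact: open_disc.
have {w_eq1 w1} w_eq1 : cmod w = 1 by apply/eqP; rewrite eq_le w1 w_eq1.
apply: cmod_affine_le_at1 => // t t0 t1.
have := open_disc (t%:C * w); rewrite cmodM cmod_real w_eq1 mulr1 ger0_norm // => /(_ t1).
have -> : a - c%:C * p * (t%:C * w) = a - t%:C * (c%:C * p * w) by ring.
by have -> : c%:C - b * (t%:C * w) = c%:C - t%:C * (b * w) by ring.
Qed.

Lemma degenerate_factor a b p z w : a * b = c%:C ^+ 2 * p ->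
  c%:C * (c%:C - a * z - b * w + c%:C * p * z * w) = (c%:C - a * z) * (c%:C - b * w).
Proof.
move=> deg; have -> : (c%:C - a * z) * (c%:C - b * w) =
  c%:C * (c%:C - a * z - b * w) + a * b * z * w by ring.
by rewrite deg; ring.
Qed.

Lemma cond3_cond2 a b p : cond3 c a b p -> cond2 c a b p.
Proof.
move=> h3 z w z1 w1; have [deg|ndeg] := eqVneq (a * b) (c%:C ^+ 2 * p).
  have [M M1 hM] := Hinf_norm_lt h3.1.
  have z0 : cmod (0 : R[i]) < 1 by rewrite cmod0.
  have [v] := hM 0 z0; rewrite /Phi_pair deg eqxx => -[<-].
  rewrite cmod_div cmod_real gtr0_norm // => /(le_lt_trans)/(_ M1).
  rewrite ltr_pdivrMr // mul1r => ha; have hb := h3.2 deg.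
  have ltc x y : cmod x < c -> cmod y <= 1 -> c%:C - x * y != 0.
    by move=> hx hy; rewrite subc_neq0 // cmodM (le_lt_trans _ hx) // ler_piMr ?cmod_ge0.
  apply: contra_neq (mulf_neq0 (ltc _ _ ha z1) (ltc _ _ hb w1)).
  by rewrite -(degenerate_factor z w deg) => ->; rewrite mulr0.
have [M [M0 M1] hM] := cond3_bound h3 ndeg.
apply/negP => /eqP D0.
have E : c%:C - b * w = z * (a - c%:C * p * w)
                        + (c%:C - a * z - b * w + c%:C * p * z * w) by ring.
rewrite D0 addr0 in E.
have hw := hM w w1.
have Y0 : cmod (c%:C - b * w) = 0.
  have : cmod (c%:C - b * w) <= M * cmod (c%:C - b * w).
    apply: le_trans hw; rewrite E cmodM ler_piMl ?cmod_ge0 //.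
  have := cmod_ge0 (c%:C - b * w); nra.
have X0 : a - c%:C * p * w = 0.
  by move: hw; rewrite Y0 mulr0 => hw; apply/eqP; rewrite -cmod_eq0 eq_le hw cmod_ge0.
move/eqP: Y0; rewrite cmod_eq0 subr_eq0 => /eqP bw.
move/eqP: ndeg; apply; move/eqP: X0; rewrite subr_eq0 => /eqP ->.
by rewrite -mulrA [w * b]mulrC -bw; ring.
Qed.

Lemma cond5_cond7 a b p : cond5 c a b p -> cond5 c b a p -> cond7 c a b p.
Proof.
move=> [h1 _] [h2 _]; rewrite /cond7 -(ltr_pM2l c_gt0).
by move: h1 h2; lra.
Qed.

Lemma cond7C a b p : cond7 c a b p -> cond7 c b a p.
Proof. by rewrite /cond7 addrC. Qed.

Lemma cond7_cmod_lt1 a b p : cond7 c a b p -> cmod p < 1.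
Proof.
move=> h7; have : 0 < c * (1 - cmod p ^+ 2).
  by apply: le_lt_trans h7; rewrite addr_ge0 ?cmod_ge0.
by rewrite pmulr_rgt0 // subr_gt0 expr_lt1 ?cmod_ge0.
Qed.

Definition beta a b p := (a - cconj b * p) / (1 - cmod p ^+ 2)%:C.

Lemma beta_reconstruct a b p : cmod p < 1 -> a = beta a b p + cconj (beta b a p) * p.
Proof.
move=> p1; have G0 : (1 - cmod p ^+ 2)%:C != 0.
  by rewrite fmorph_eq0 subr_eq0 eq_sym sqrp_eq1 ?cmod_ge0 // lt_eqF.
rewrite /beta cconjM cconjV cconj_real cconjB cconjM cconjK.
by rewrite unit_gapE; field; rewrite -unit_gapE.
Qed.

Lemma cond7_beta_lt a b p : cond7 c a b p -> cmod (beta a b p) + cmod (beta b a p) < c.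
Proof.
move=> h7; have p1 := cond7_cmod_lt1 h7.
have G := unit_gap_gt0 p1.
by rewrite /beta !cmod_div cmod_real gtr0_norm // -mulrDl ltr_pdivrMr // addrC.
Qed.

Lemma cond7_cond1 a b p : cond7 c a b p -> cond1 c a b p.
Proof.
move=> h7; have p1 := cond7_cmod_lt1 h7; split => //.
exists (beta a b p), (beta b a p).
by split; [exact: beta_reconstruct | exact: beta_reconstruct | exact: cond7_beta_lt].
Qed.

Lemma cond1_cond7 a b p : cond1 c a b p -> cond7 c a b p.
Proof.
move=> [p1 [b1 [b2 [-> -> hb]]]].
have G := unit_gap_gt0 p1.
have E x y : x + cconj y * p - cconj (y + cconj x * p) * p = x * (1 - cmod p ^+ 2)%:C.
  by rewrite unit_gapE cconjD cconjM cconjK; ring.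
by rewrite /cond7 !E !cmodM cmod_real gtr0_norm // -mulrDl ltr_pM2r // addrC.
Qed.

Lemma cond7_cmod_lt a b p : cond7 c a b p -> cmod b < c.
Proof.
move=> h7; have p1 := cond7_cmod_lt1 h7.
have G := unit_gap_gt0 p1.
have E : b * (1 - cmod p ^+ 2)%:C = (b - cconj a * p) + p * cconj (a - cconj b * p).
  by rewrite unit_gapE cconjB cconjM cconjK; ring.
rewrite -(ltr_pM2r G) -{1}[1 - _]gtr0_norm // -cmod_real -cmodM E.
apply: le_lt_trans (ler_cmodD _ _) (le_lt_trans _ h7).
by rewrite lerD2l cmodM cmodJ ler_piMl ?cmod_ge0 ?(ltW p1).
Qed.

Lemma swap_identity a b p :
  cmod (a - cconj b * p) ^+ 2 - cmod (b - cconj a * p) ^+ 2 =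
  (cmod a ^+ 2 - cmod b ^+ 2) * (1 - cmod p ^+ 2).
Proof. complex_ring. Qed.

Lemma cond7_cond5 a b p : cond7 c a b p -> cond5 c a b p.
Proof.
move=> h7; split; last exact: cond7_cmod_lt h7.
have G := unit_gap_gt0 (cond7_cmod_lt1 h7).
move: h7 (swap_identity a b p); rewrite /cond7.
set u := cmod (a - _); set v := cmod (b - _) => h7 E.
have u0 : 0 <= u := cmod_ge0 _; have v0 : 0 <= v := cmod_ge0 _.
have : u ^+ 2 < (c * (1 - cmod p ^+ 2) - v) ^+ 2 by rewrite ltr_sqr ?nnegrE //; lra.
nra.
Qed.

Lemma product_identity a b p :
  c ^+ 2 * cmod (a - cconj b * p) ^+ 2 - cmod (a * b - c%:C ^+ 2 * p) ^+ 2 =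
  (c ^+ 2 - cmod b ^+ 2) * (cmod a ^+ 2 - c ^+ 2 * cmod p ^+ 2).
Proof. complex_ring. Qed.

Lemma cond4_cond6 a b p : cmod p < 1 -> cond4 c a b p -> cond6 c a b p.
Proof.
move=> p1 h4; split => //; have B := gap_gt0 (cond4_cmod_lt h4).
move: h4 (product_identity a b p); rewrite /cond4.
set U := cmod (a - _); set D := cmod (a * b - _) => h4 E.
have cU0 : 0 <= c * U by rewrite mulr_ge0 ?cmod_ge0 ?(ltW c_gt0).
have : (c * U) ^+ 2 < (c ^+ 2 - cmod b ^+ 2 - D) ^+ 2.
  by rewrite ltr_sqr ?nnegrE //; lra.
nra.
Qed.

Lemma cond8_cond2 a b p : cond8 c a b p -> cond2 c a b p.
Proof.
move=> [B [B1 ea eb ed]] z w z1 w1; apply/negP => /eqP D0.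
suff : 1 <= opnorm2 B by rewrite leNgt B1.
move: ed ea eb D0; rewrite det_mx22.
set al := B ord0 ord0; set be := B ord0 ord_max.
set ga := B ord_max ord0; set de := B ord_max ord_max.
move=> <- -> -> D0.
have F : 1 - al * z - de * w + (al * de - be * ga) * z * w = 0.
  apply: (mulfI (_ : c%:C != 0)); first by rewrite fmorph_eq0 gt_eqF.
  by rewrite mulr0 -D0; ring.
(* B maps (z be w, w (1 - al z)) to (be w, 1 - al z), which is at least as long. *)
have Y0 : al * (z * (be * w)) + be * (w * (1 - al * z)) = be * w by ring.
have Y1 : ga * (z * (be * w)) + de * (w * (1 - al * z)) = 1 - al * z.
  by rewrite -[RHS]subr0 -F; ring.
have [nz|] := boolP ((be * w != 0) || (1 - al * z != 0)).
  apply: (opnorm2_ge1 (x0 := z * (be * w)) (x1 := w * (1 - al * z))).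
    apply: contraTT nz; rewrite negb_or !negbK => /andP[/eqP x0 /eqP x1].
    have bw0 : be * w = 0 by rewrite -Y0 x0 x1 !mulr0 addr0.
    have az0 : 1 - al * z = 0 by rewrite -Y1 x0 x1 !mulr0 addr0.
    by rewrite bw0 az0 eqxx.
  rewrite -/al -/be -/ga -/de Y0 Y1 [cmod (z * _)]cmodM [cmod (w * _)]cmodM !exprMn.
  by apply: lerD; rewrite ler_piMl ?sqr_ge0 // expr_le1 ?cmod_ge0.
rewrite negb_or !negbK subr_eq0 => /andP[_ /eqP az].
apply: (opnorm2_ge1 (x0 := 1) (x1 := 0)); first by rewrite oner_eq0.
rewrite -/al -/ga !mulr1 !mulr0 !addr0 cmod1 cmod0 expr0n addr0 expr1n.
have : cmod al * cmod z = 1 by rewrite -cmodM -az cmod1.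
have := cmod_ge0 al; have := sqr_ge0 (cmod ga); have := cmod_ge0 z; nra.
Qed.

Lemma cond6_cond9 a b p : cond6 c a b p -> cond9 c a b p.
Proof.
move=> [p1 h6]; have c_neq0 : c%:C != 0 by rewrite fmorph_eq0 gt_eqF.
set w := sqrtc ((a * b - c%:C ^+ 2 * p) / c%:C ^+ 2).
have w2 : w * w = (a * b - c%:C ^+ 2 * p) / c%:C ^+ 2 by rewrite -expr2 sqr_sqrtc.
set al := a / c%:C; set de := b / c%:C.
have detB : al * de - w * w = p by rewrite w2 /al /de; field.
have [B00 B11 B01 B10] := symmx2E al w de.
exists (symmx2 al w de); split;
  [| by rewrite B00 /al mulrC divfK | by rewrite B11 /de mulrC divfK
   | by rewrite det_mx22 B00 B11 B01 B10 | exact: symmx2_tr].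
have c2 : 0 < c ^+ 2 by rewrite exprn_gt0.
apply: opnorm2_symmx2_lt1; rewrite detB // -(ltr_pM2l c2) mulr1.
have sqr_div x : cmod (x / c%:C) ^+ 2 = cmod x ^+ 2 / c ^+ 2.
  by rewrite cmod_div cmod_real gtr0_norm // expr_div_n.
have -> : cmod w ^+ 2 = cmod (a * b - c%:C ^+ 2 * p) / c ^+ 2.
  by rewrite expr2 -cmodM w2 cmod_div -rmorphXn cmod_real gtr0_norm.
rewrite !sqr_div; move: h6; set D := cmod (a * b - _).
have -> // : c ^+ 2 * (cmod a ^+ 2 / c ^+ 2 + 2 * (D / c ^+ 2) + cmod b ^+ 2 / c ^+ 2
                      - cmod p ^+ 2) =
             cmod a ^+ 2 + cmod b ^+ 2 - c ^+ 2 * cmod p ^+ 2 + 2 * D.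
by field; rewrite gt_eqF.
Qed.

Lemma cond2_cond7 a b p : cond2 c a b p -> cond7 c a b p.
Proof. by move=> h; apply: cond5_cond7; apply: cond2_cond5 => //; exact: cond2C. Qed.

Lemma cond2_cond6 a b p : cond2 c a b p -> cond6 c a b p.
Proof.
move=> h; exact: cond4_cond6 (cond7_cmod_lt1 (cond2_cond7 h)) (cond5_cond4 (cond2_cond5 h)).
Qed.

Lemma cond9_cond8 a b p : cond9 c a b p -> cond8 c a b p.
Proof. by move=> [B [? ? ? ? _]]; exists B. Qed.

Lemma cond3_iff a b p : cond3 c a b p <-> cond2 c a b p.
Proof. by split=> [/cond3_cond2 | /cond2_cond5/cond5_cond4/cond4_cond3]. Qed.

Lemma cond3'_iff a b p :
  (Hinf_norm (Phi_pair c b a p) < 1%:E)%E /\ (a * b = c%:C ^+ 2 * p -> cmod a < c) <->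
  cond2 c a b p.
Proof. by rewrite [a * b]mulrC; split=> [/cond3_iff/cond2C | /cond2C/cond3_iff]. Qed.

Lemma cond4_iff a b p : cond4 c a b p <-> cond2 c a b p.
Proof. by split=> [/cond4_cond3/cond3_cond2 | /cond2_cond5/cond5_cond4]. Qed.

Lemma cond4'_iff a b p :
  c * cmod (b - cconj a * p) + cmod (a * b - c%:C ^+ 2 * p) < c ^+ 2 - cmod a ^+ 2 <->
  cond2 c a b p.
Proof. by rewrite [a * b]mulrC; split=> [/cond4_iff/cond2C | /cond2C/cond4_iff]. Qed.

Lemma cond5_iff a b p : cond5 c a b p <-> cond2 c a b p.
Proof. by split=> [/cond5_cond4/cond4_iff | /cond2_cond5]. Qed.

Lemma cond5'_iff a b p : cond5 c b a p <-> cond2 c a b p.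
Proof. by split=> [/cond5_iff/cond2C | /cond2C/cond5_iff]. Qed.

Lemma cond6_iff a b p : cond6 c a b p <-> cond2 c a b p.
Proof. by split=> [/cond6_cond9/cond9_cond8/cond8_cond2 | /cond2_cond6]. Qed.

Lemma cond7_iff a b p : cond7 c a b p <-> cond2 c a b p.
Proof. by split=> [/cond7_cond5/cond5_iff | /cond2_cond7]. Qed.

Lemma cond1_iff a b p : cond1 c a b p <-> cond2 c a b p.
Proof. by split=> [/cond1_cond7/cond7_iff | /cond7_iff/cond7_cond1]. Qed.

Lemma cond8_iff a b p : cond8 c a b p <-> cond2 c a b p.
Proof. by split=> [/cond8_cond2 | /cond6_iff/cond6_cond9/cond9_cond8]. Qed.

Lemma cond9_iff a b p : cond9 c a b p <-> cond2 c a b p.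
Proof. by split=> [/cond9_cond8/cond8_iff | /cond6_iff/cond6_cond9]. Qed.

End PairEquivalences.

Lemma all_in_and {I : pred nat} {A : Prop} {P : nat -> Prop} : (exists j, I j) ->
  (A /\ forall j, I j -> P j) <-> (forall j, I j -> A /\ P j).
Proof.
move=> [j0 Ij0]; split=> [[hA hP] j Ij | h]; first by split; [|exact: hP].
by split=> [|j /h []//]; case: (h j0 Ij0).
Qed.

Lemma all_in_exists {I : pred nat} {T : Type} (x0 : T) {P : nat -> T -> Prop} :
  (exists f : nat -> T, forall j, I j -> P j (f j)) <-> (forall j, I j -> exists x, P j x).
Proof.
split=> [[f hf] j /hf|h]; first by exists (f j).
have [f hf] : exists f : nat -> T, forall j, I j -> P j (f j).
  have /choice [f hf] : forall j, exists x, I j -> P j x.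
    by move=> j; case: (boolP (I j)) => [/h [x]|nIj]; [exists x | exists x0].
  by exists f.
by exists f.
Qed.

Section Coordinates.
Variables (R : realType) (n : nat) (y : nat -> R[i]) (q : R[i]).

Lemma cbin_real : cbin R n = fun j => (rbin R n j)%:C.
Proof. by apply: funext => j; rewrite /cbin /rbin rmorph_nat. Qed.

Lemma half_index j : (1 <= j <= n./2)%N ->
  [/\ (j <= n)%N, (1 <= j <= n.-1)%N & (1 <= n - j <= n.-1)%N].
Proof. by case/andP; rewrite geq_half_double -addnn => ? ?; split; lia. Qed.

Lemma upper_index j : (1 <= j <= n.-1)%N -> (n./2 < j)%N -> (1 <= n - j <= n./2)%N.
Proof. by rewrite ltn_half_double geq_half_double -!addnn => /andP[? ?] ?; lia. Qed.

Lemma one_half_index : (2 <= n)%N -> (1 <= 1 <= n./2)%N.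
Proof. by rewrite leqnn half_gt0. Qed.

Lemma rbin_gt0 j : (j <= n)%N -> 0 < rbin R n j.
Proof. by move=> jn; rewrite /rbin ltr0n bin_gt0. Qed.

Lemma rbin_sub j : (j <= n)%N -> rbin R n (n - j) = rbin R n j.
Proof. by move=> jn; rewrite /rbin bin_sub. Qed.

Definition half_cond2 :=
  forall j, (1 <= j <= n./2)%N -> cond2 (rbin R n j) (y j) (y (n - j)%N) q.

Lemma all_pairs_iff (P : R -> R[i] -> R[i] -> R[i] -> Prop) :
  (forall c : R, 0 < c -> forall a b p, P c a b p <-> cond2 c a b p) ->
  (forall j, (1 <= j <= n./2)%N -> P (rbin R n j) (y j) (y (n - j)%N) q) <-> half_cond2.
Proof.
move=> PE; split=> h j hj; have [/rbin_gt0 c_gt0 _ _] := half_index hj.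
  by apply/PE; last exact: h.
by apply/(PE _ c_gt0); exact: h.
Qed.

Lemma PhiHinfE j : PhiHinf n j y q = Hinf_norm (Phi_pair (rbin R n j) (y j) (y (n - j)%N) q).
Proof. by rewrite /PhiHinf /Hinf_norm /Phi /Phi_pair cbin_real. Qed.

Lemma half_cond3_iff :
  (forall j, (1 <= j <= n./2)%N -> (PhiHinf n j y q < 1%:E)%E /\
     (y j * y (n - j)%N = (rbin R n j)%:C ^+ 2 * q -> cmod (y (n - j)%N) < rbin R n j))
  <-> half_cond2.
Proof.
rewrite -(all_pairs_iff (@cond3_iff R)).
by split=> h j /h; rewrite PhiHinfE.
Qed.

Lemma half_cond3'_iff :
  (forall j, (1 <= j <= n./2)%N -> (PhiHinf n (n - j) y q < 1%:E)%E /\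
     (y j * y (n - j)%N = (rbin R n j)%:C ^+ 2 * q -> cmod (y j) < rbin R n j))
  <-> half_cond2.
Proof.
rewrite -(all_pairs_iff (@cond3'_iff R)).
by split=> h j hj; have [jn _ _] := half_index hj; move: (h j hj);
  rewrite PhiHinfE subKn // rbin_sub.
Qed.

Lemma tildeG_iff : (2 <= n)%N -> tildeG n y q <-> half_cond2.
Proof.
move=> n_ge2; split.
  move=> [q1 [be hbe]]; apply/(all_pairs_iff (@cond1_iff R)) => j hj.
  have [jn j_rng nj_rng] := half_index hj.
  have [yj bej] := hbe j j_rng; have [ynj _] := hbe _ nj_rng; rewrite subKn // in ynj.
  by split=> //; exists (be j), (be (n - j)%N).
move/(all_pairs_iff (@cond7_iff R)) => h7.
have c1 : 0 < rbin R n 1 by apply: rbin_gt0; exact: ltnW.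
have q1 := cond7_cmod_lt1 c1 (h7 1 (one_half_index n_ge2)); split=> //.
exists (fun j => beta (y j) (y (n - j)%N) q) => j j_rng.
have jn : (j <= n)%N by case/andP: j_rng => _ /leq_trans; apply; exact: leq_pred.
rewrite /= subKn //; split; first exact: beta_reconstruct.
have [jh|jh] := leqP j n./2.
  by apply: cond7_beta_lt (h7 j _); [exact: rbin_gt0 | case/andP: j_rng => -> _].
have := h7 _ (upper_index j_rng jh); rewrite subKn // rbin_sub //.
by move=> /cond7C /(cond7_beta_lt (rbin_gt0 jn)).
Qed.

End Coordinates.

Theorem mainTheorem2 (R : realType) (n : nat) (y : nat -> R[i]) (q : R[i]) :
  (2 <= n)%N ->
  [<->
   (* (1) *)
   tildeG n y q;
   (* (2) *)
   (forall j : nat, (1 <= j <= n./2)%N ->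
      forall z w : R[i], cmod z <= 1 -> cmod w <= 1 ->
      cbin R n j - y j * z - y (n - j)%N * w + cbin R n j * q * z * w != 0);
   (* (3) *)
   (forall j : nat, (1 <= j <= n./2)%N ->
      (PhiHinf n j y q < 1%:E)%E /\
      (y j * y (n - j)%N = cbin R n j ^+ 2 * q -> cmod (y (n - j)%N) < rbin R n j));
   (* (3') *)
   (forall j : nat, (1 <= j <= n./2)%N ->
      (PhiHinf n (n - j) y q < 1%:E)%E /\
      (y j * y (n - j)%N = cbin R n j ^+ 2 * q -> cmod (y j) < rbin R n j));
   (* (4) *)
   (forall j : nat, (1 <= j <= n./2)%N ->
      rbin R n j * cmod (y j - cconj (y (n - j)%N) * q)
      + cmod (y j * y (n - j)%N - cbin R n j ^+ 2 * q)
      < rbin R n j ^+ 2 - cmod (y (n - j)%N) ^+ 2);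
   (* (4') *)
   (forall j : nat, (1 <= j <= n./2)%N ->
      rbin R n j * cmod (y (n - j)%N - cconj (y j) * q)
      + cmod (y j * y (n - j)%N - cbin R n j ^+ 2 * q)
      < rbin R n j ^+ 2 - cmod (y j) ^+ 2);
   (* (5) *)
   (forall j : nat, (1 <= j <= n./2)%N ->
      cmod (y j) ^+ 2 - cmod (y (n - j)%N) ^+ 2 + rbin R n j ^+ 2 * cmod q ^+ 2
      + 2 * rbin R n j * cmod (y (n - j)%N - cconj (y j) * q) < rbin R n j ^+ 2
      /\ cmod (y (n - j)%N) < rbin R n j);
   (* (5') *)
   (forall j : nat, (1 <= j <= n./2)%N ->
      cmod (y (n - j)%N) ^+ 2 - cmod (y j) ^+ 2 + rbin R n j ^+ 2 * cmod q ^+ 2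
      + 2 * rbin R n j * cmod (y j - cconj (y (n - j)%N) * q) < rbin R n j ^+ 2
      /\ cmod (y j) < rbin R n j);
   (* (6) *)
   (cmod q < 1 /\
    forall j : nat, (1 <= j <= n./2)%N ->
      cmod (y j) ^+ 2 + cmod (y (n - j)%N) ^+ 2 - rbin R n j ^+ 2 * cmod q ^+ 2
      + 2 * cmod (y j * y (n - j)%N - cbin R n j ^+ 2 * q) < rbin R n j ^+ 2);
   (* (7) *)
   (forall j : nat, (1 <= j <= n./2)%N ->
      cmod (y (n - j)%N - cconj (y j) * q) + cmod (y j - cconj (y (n - j)%N) * q)
      < rbin R n j * (1 - cmod q ^+ 2));
   (* (8) *)
   (exists B : nat -> 'M[R[i]]_2, forall j : nat, (1 <= j <= n./2)%N ->
      [/\ opnorm2 (B j) < 1,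
          y j = cbin R n j * B j ord0 ord0,
          y (n - j)%N = cbin R n j * B j ord_max ord_max
        & \det (B j) = q]);
   (* (9) *)
   (exists B : nat -> 'M[R[i]]_2, forall j : nat, (1 <= j <= n./2)%N ->
      [/\ opnorm2 (B j) < 1,
          y j = cbin R n j * B j ord0 ord0,
          y (n - j)%N = cbin R n j * B j ord_max ord_max,
          \det (B j) = q
        & (B j)^T = B j])
  ].
Proof.
move=> n_ge2; rewrite cbin_real.
have half1 : exists j, (1 <= j <= n./2)%N by exists 1%N; exact: one_half_index.
have e1 := tildeG_iff y q n_ge2.
have e3 := half_cond3_iff n y q.
have e3' := half_cond3'_iff n y q.
have e4 := all_pairs_iff n y q (@cond4_iff R).
have e4' := all_pairs_iff n y q (@cond4'_iff R).
have e5 := all_pairs_iff n y q (@cond5_iff R).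
have e5' := all_pairs_iff n y q (@cond5'_iff R).
have e6 := iff_trans (all_in_and half1) (all_pairs_iff n y q (@cond6_iff R)).
have e7 := all_pairs_iff n y q (@cond7_iff R).
have e8 := iff_trans (all_in_exists 0) (all_pairs_iff n y q (@cond8_iff R)).
have e9 := iff_trans (all_in_exists 0) (all_pairs_iff n y q (@cond9_iff R)).
by tfae; [move=> /e1 | move=> /e3 | move=> /e3/e3' | move=> /e3'/e4 | move=> /e4/e4'
  | move=> /e4'/e5 | move=> /e5/e5' | move=> /e5'/e6 | move=> /e6/e7 | move=> /e7/e8
  | move=> /e8/e9 | move=> /e9/e1].
Qed.
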